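(* Let $\epsilon\in(0,1)$ and for $i=2,\dots,n$ let $0<p_i<q_i<+\infty$; write $(p,q)=(p_2,q_2)\times\cdots\times(p_n,q_n)$ and let $\psi:(0,\epsilon)\times(p,q)\to\mathbb{R}^n$, $\psi(t)=(t_1,t_1^{t_2},\dots,t_1^{t_n})$. Let $\beta\in\mathbb{Q}^n\setminus\{0\}$ be such that $\psi(t)^\beta=\prod_{i}\psi_i(t)^{\beta_i}$ is bounded on $(0,\epsilon)\times(p,q)$. Then there exist $p_i\le p'_i<q'_i\le q_i$ ($i=2,\dots,n$) such that, with $(p',q')=\prod_{i=2}^n(p'_i,q'_i)$, $\psi(t)^\beta\to0$ as $t_1\to0$ uniformly in $(t_2,\dots,t_n)\in(p',q')$. *)

From HB Require Import structures.
From mathcomp Require Import all_boot all_order all_algebra.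
From mathcomp Require Import all_classical all_reals all_analysis.
Set Implicit Arguments. Unset Strict Implicit. Unset Printing Implicit Defensive.
Import Order.TTheory GRing.Theory Num.Theory.
Local Open Scope ring_scope.

(* Coordinates of R^(n+1) are indexed by 'I_n.+1; coordinate ord0 is t_1 and
   coordinate lift ord0 j (j : 'I_n) is t_(j+2).  The "tail" variables
   (t_2,...,t_(n+1)) are a function s : 'I_n -> R. *)

Definition psi (R : realType) (n : nat) (t1 : R) (s : 'I_n -> R) : 'I_n.+1 -> R :=
  fun i => if unlift ord0 i is Some j then t1 `^ (s j) else t1.

Definition psi_pow (R : realType) (n : nat) (beta : 'I_n.+1 -> rat)
  (t1 : R) (s : 'I_n -> R) : R :=
  \prod_(i < n.+1) (psi t1 s i) `^ (ratr (beta i)).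

Definition in_box (R : realType) (n : nat) (p q s : 'I_n -> R) : Prop :=
  forall j, p j < s j < q j.

From HB Require Import structures.
From mathcomp Require Import all_boot all_order all_algebra.
From mathcomp Require Import all_classical all_reals all_analysis.
From mathcomp Require Import ring lra.
Import Order.TTheory GRing.Theory Num.Theory.
Set Implicit Arguments. Unset Strict Implicit.
Local Open Scope ring_scope.

(* psi(t)^beta = t_1^(L s) with L s = beta_1 + sum_j beta_(j+1) s_j affine in the
   tail variables s.  Boundedness as t_1 -> 0 forces L >= 0 on the box (p,q), and
   since beta <> 0 this makes L positive at the centre m of the box.  Halving each
   interval (p_j,q_j) on the side where the coefficient of s_j makes L grow gives a
   sub-box on which L >= L m > 0, so t_1^(L s) <= t_1^(L m) -> 0 uniformly. *)

Lemma expR_mul_ln_bounded_ge0 (R : realType) (a M eps : R) :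
  0 < eps -> (forall t, 0 < t < eps -> expR (a * ln t) <= M) -> 0 <= a.
Proof.
move=> eps_gt0 bounded; rewrite leNgt; apply/negP => a_lt0.
pose x := Num.max (- M / a) (- ln eps) + 1.
have M_lt : M < - x * a.
  have : - M / a <= Num.max (- M / a) (- ln eps) by rewrite le_max lexx.
  rewrite ler_ndivrMr // /x; nra.
have x_gt : - ln eps < x by rewrite /x; have := le_max (- ln eps) (- M / a) (- ln eps); lra.
have t_lt : expR (- x) < eps by rewrite -[eps in _ < eps]lnK ?posrE // ltr_expR; lra.
have := bounded _ (ltac:(by rewrite expR_gt0 t_lt) : 0 < expR (- x) < eps).
by rewrite expRK; have := expR_ge1Dx (a * - x); lra.
Qed.

Lemma expR_mul_ln_lt (R : realType) (a c e t : R) :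
  0 < c <= a -> 0 < e -> 0 < t < 1 -> t < expR (ln e / c) -> expR (a * ln t) < e.
Proof.
move=> /andP[c_gt0 c_le_a] e_gt0 /andP[t_gt0 t_lt1] t_small.
rewrite -[e in _ < e]lnK ?posrE // ltr_expR.
have ln_t_lt0 : ln t < 0 by apply: ln_lt0; rewrite t_gt0 t_lt1.
have : ln t < ln e / c by rewrite -[ln e / c]expRK ltr_ln ?posrE ?expR_gt0.
rewrite ltr_pdivlMr //; nra.
Qed.

Section PsiExponent.
Variables (R : realType) (n : nat) (beta : 'I_n.+1 -> rat).

Definition psi_exponent (s : 'I_n -> R) : R :=
  ratr (beta ord0) + \sum_(j < n) ratr (beta (lift ord0 j)) * s j.

Local Notation b j := (ratr (beta (lift ord0 j)) : R).

Lemma psi_gt0 (t1 : R) (s : 'I_n -> R) i : 0 < t1 -> 0 < psi t1 s i.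
Proof. by move=> t1_gt0; rewrite /psi; case: unliftP => [j _|_] //; exact: powR_gt0. Qed.

Lemma psi_powE (t1 : R) (s : 'I_n -> R) :
  0 < t1 -> psi_pow beta t1 s = expR (psi_exponent s * ln t1).
Proof.
move=> t1_gt0; rewrite /psi_pow.
under eq_bigr => i _ do rewrite /powR gt_eqF ?psi_gt0 //.
rewrite -expR_sum big_ord_recl /psi_exponent mulrDl mulr_suml /psi unlift_none.
congr (expR (_ + _)); apply: eq_bigr => j _.
by rewrite liftK ln_powR mulrA.
Qed.

Lemma psi_exponentD1 (s : 'I_n -> R) k x :
  psi_exponent (fun j => if j == k then x else s j)
  = psi_exponent s + b k * (x - s k).
Proof.
rewrite /psi_exponent (bigD1 k) //= [in RHS](bigD1 k) //= eqxx.
rewrite (eq_bigr (fun j => b j * s j)); last by move=> j /negbTE ->.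
ring.
Qed.

Variables (p q : 'I_n -> R).
Hypothesis p_lt_q : forall j, p j < q j.

Definition box_centre j : R := (p j + q j) / 2.

Lemma in_box_centre : in_box p q box_centre.
Proof. by move=> j; have := p_lt_q j; rewrite /box_centre => ?; apply/andP; split; lra. Qed.

Lemma psi_exponent_centre_gt0 :
  (exists i, beta i != 0) -> (forall s, in_box p q s -> 0 <= psi_exponent s) ->
  0 < psi_exponent box_centre.
Proof.
move=> [i beta_i_neq0] L_ge0; have L_centre_ge0 := L_ge0 _ in_box_centre.
case: (pselect (exists k, b k != 0)) => [[k bk_neq0]|b_eq0].
  (* Move coordinate k off the centre in the direction where L decreases. *)
  pose x := if b k < 0 then (box_centre k + q k) / 2 else (p k + box_centre k) / 2.
  have bx_lt0 : b k * (x - box_centre k) < 0.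
    have := p_lt_q k; rewrite /x /box_centre; case: ifP => bk_lt0 ? ; first nra.
    have : 0 < b k by rewrite lt_neqAle eq_sym bk_neq0 leNgt bk_lt0.
    nra.
  suff : 0 <= psi_exponent (fun j => if j == k then x else box_centre j).
    by rewrite psi_exponentD1; lra.
  apply: L_ge0 => j; case: eqP => [->|_]; last exact: in_box_centre.
  by have := p_lt_q k; rewrite /x /box_centre; case: ifP => _ ?; apply/andP; split; lra.
have {}b_eq0 j : b j = 0 by apply/eqP/negPn/negP => ?; apply: b_eq0; exists j.
rewrite lt_neqAle L_centre_ge0 andbT eq_sym /psi_exponent big1 ?addr0; last first.
  by move=> j _; rewrite b_eq0 mul0r.
rewrite fmorph_eq0; case: (unliftP ord0 i) beta_i_neq0 => [j ->|-> //] beta_j_neq0.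
by have /eqP := b_eq0 j; rewrite fmorph_eq0 (negbTE beta_j_neq0).
Qed.

Definition half_box_low j := if b j < 0 then p j else box_centre j.
Definition half_box_high j := if b j < 0 then box_centre j else q j.

Lemma half_box_sub j :
  p j <= half_box_low j /\ half_box_low j < half_box_high j /\ half_box_high j <= q j.
Proof.
by have := p_lt_q j; rewrite /half_box_low /half_box_high /box_centre;
  case: ifP => _ ?; split; try split; lra.
Qed.

Lemma psi_exponent_half_box_ge s :
  in_box half_box_low half_box_high s -> psi_exponent box_centre <= psi_exponent s.
Proof.
move=> s_in; rewrite lerD2l; apply: ler_sum => j _.
have := s_in j; rewrite /half_box_low /half_box_high; case: ifP => bj_lt0 /andP[? ?].
  nra.
have : 0 <= b j by rewrite leNgt bj_lt0.
nra.
Qed.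

End PsiExponent.

Theorem lemma4p4 (R : realType) (n : nat) (eps : R) (p q : 'I_n -> R)
  (beta : 'I_n.+1 -> rat) :
  0 < eps < 1 ->
  (forall j, 0 < p j < q j) ->
  (exists i, beta i != 0) ->
  (exists M : R, forall (t1 : R) (s : 'I_n -> R),
      0 < t1 < eps -> in_box p q s -> `|psi_pow beta t1 s| <= M) ->
  exists p' q' : 'I_n -> R,
    (forall j, p j <= p' j /\ p' j < q' j /\ q' j <= q j) /\
    (forall e : R, 0 < e -> exists delta : R, 0 < delta /\
       forall (t1 : R) (s : 'I_n -> R),
         0 < t1 < delta -> t1 < eps -> in_box p' q' s ->
         `|psi_pow beta t1 s| < e).
Proof.
move=> /andP[eps_gt0 eps_lt1] p_pos beta_neq0 [M bounded].
have p_lt_q j : p j < q j by have /andP[] := p_pos j.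
have L_ge0 s : in_box p q s -> 0 <= psi_exponent beta s.
  move=> s_in; apply: (expR_mul_ln_bounded_ge0 (M := M) eps_gt0) => t t_in.
  have /andP[t_gt0 _] := t_in.
  rewrite -[X in X <= _]ger0_norm ?expR_ge0 // -(psi_powE beta s t_gt0).
  exact: bounded.
have c_gt0 := psi_exponent_centre_gt0 p_lt_q beta_neq0 L_ge0.
exists (half_box_low beta p q), (half_box_high beta p q).
split; first exact: half_box_sub.
move=> e e_gt0; exists (expR (ln e / psi_exponent beta (box_centre p q))).
split; first exact: expR_gt0.
move=> t s /andP[t_gt0 t_small] t_lt_eps s_in.
rewrite psi_powE // ger0_norm ?expR_ge0 //.
apply: expR_mul_ln_lt e_gt0 _ t_small.
  by rewrite c_gt0 psi_exponent_half_box_ge.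
by rewrite t_gt0 /=; lra.
Qed.
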